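(* Let $q\in(0,\tfrac12)$ and let $T\sim U(1,2)$, $S\sim U(-1,0)$ be independent. Let $p_3^{PD}$ be the probability that $$P_{T,S}(x)=(T+S-1)x^3+\big(1-T-2S+q(S-1-T)\big)x^2+\big(S+q(T-S)\big)x$$ has exactly three distinct roots in $[0,1]$. Then $$p_3^{PD}=\frac{1}{1-2q}\,\mathrm{Area}(D\cap D_2),$$ where $D=\{(x,y)\in\mathbb{R}^2:\ -1<x<0,\ -\frac{x^2}{4q}-q<y<-q\}$ and $D_2$ is the open triangle with vertices $M=(-q,-(1-q))$, $N=\big(0,-\frac{1-2q}{1-q}\big)$, $O=(0,0)$, i.e. $D_2=\{(x,y):\ -q<x<0,\ \frac{qx-(1-2q)}{1-q}<y<\frac{(1-q)x}{q}\}$.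
   Context: ''Area'' denotes two-dimensional Lebesgue measure. *)

From HB Require Import structures.
From mathcomp Require Import all_boot all_order all_algebra.
From mathcomp Require Import all_classical all_reals all_analysis.
Set Implicit Arguments. Unset Strict Implicit. Unset Printing Implicit Defensive.
Import Order.TTheory GRing.Theory Num.Theory.
Local Open Scope classical_set_scope.
Local Open Scope ring_scope.

Definition PTS {R : realType} (q t s x : R) : R :=
  (t + s - 1) * x ^+ 3
  + (1 - t - 2 * s + q * (s - 1 - t)) * x ^+ 2
  + (s + q * (t - s)) * x.

Definition three_roots_01 {R : realType} (f : R -> R) : Prop :=
  exists x1 x2 x3 : R, x1 < x2 /\ x2 < x3 /\
    [set x | 0 <= x <= 1 /\ f x = 0] = [set x1; x2; x3].

Definition E3 {R : realType} (q : R) : set (R * R) :=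
  [set ts | three_roots_01 (PTS q ts.1 ts.2)].

Definition D {R : realType} (q : R) : set (R * R) :=
  [set xy | -1 < xy.1 < 0 /\ - (xy.1 ^+ 2) / (4 * q) - q < xy.2 < - q].

Definition D2 {R : realType} (q : R) : set (R * R) :=
  [set xy | -q < xy.1 < 0 /\
     (q * xy.1 - (1 - 2 * q)) / (1 - q) < xy.2 < (1 - q) * xy.1 / q].

Lemma lt_1_2 {R : realType} : (1 : R) < 2.
Proof. by rewrite ltr1n. Qed.

Lemma lt_m1_0 {R : realType} : (-1 : R) < 0.
Proof. by rewrite ltrN10. Qed.

From HB Require Import structures.
From mathcomp Require Import all_boot all_order all_algebra.
From mathcomp Require Import all_classical all_reals all_analysis.
From mathcomp Require Import ring lra.
Import Order.TTheory GRing.Theory Num.Theory.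
Local Open Scope classical_set_scope.
Local Open Scope ring_scope.

(* Since P_{t,s}(0) = 0 and P_{t,s}(1) = -q, P_{t,s}(x) = x (a x^2 + b x + c)
   with a + b + c = -q < 0, so P_{t,s} has three roots in [0,1] iff the
   quadratic factor has two distinct roots in (0,1), i.e. iff
   a < 0, c < 0, b^2 - 4ac > 0, b > 0 and a < q + c.  The affine map
   (t,s) |-> ((1-q)t + qs - 1 + q, qt + (1-q)s - q), of determinant 1 - 2q,
   maps the (t,s) satisfying these conditions in the square ]1,2[ x ]-1,0[
   exactly onto the intersection of D and D2.  The law of (T,S) is Lebesgue
   measure on that unit square, and planar Lebesgue measure of an affine
   preimage is the measure divided by the determinant: the map factors into
   shears, scalings and coordinate swaps, each handled slice by slice. *)

Section affine_change_of_variables.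
Context {R : realType}.
Local Notation T := (measurableTypeR R).
Local Notation leb := (@lebesgue_measure R).
Local Notation leb2 := (leb \x leb)%E.

Lemma lebesgue_measure_affine (k m : R) (A : set R) : 0 < k -> measurable A ->
  leb A = (k%:E * leb ((fun y => (k * y + m)%R) @^-1` A))%E.
Proof.
move=> k0 mA; have k0' : 0 <= k by exact: ltW.
have maff : measurable_fun (setT : set T) ((fun y : R => k * y + m) : T -> T).
  exact: measurable_realfun.measurable_funD.
pose image := measure_function_pushforward__canonical__measure_function_Measure
  leb maff.
apply: (@lebesgue_measure_unique R (mscale (NngNum k0') image)) mA.
move=> _ [[a b] _ <-]; rewrite /= /mscale /= /pushforward.
have -> : (fun y => k * y + m) @^-1` `]a, b] = `](a - m) / k, (b - m) / k]%classic.
  apply/seteqP; split => y /=; rewrite !in_itv /= ltr_pdivrMr // ler_pdivlMr //.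
    by move=> /andP[? ?]; apply/andP; split; lra.
  by move=> /andP[? ?]; apply/andP; split; lra.
rewrite !lebesgue_measure_itv /= !lte_fin ltr_pM2r ?invr_gt0 // ltrBlDr subrK.
case: ifPn => ab; last by rewrite mule0.
by rewrite -EFinD -EFinM; congr (_%:E); field; exact: lt0r_neq0.
Qed.

Lemma product_lebesgue_shear (f : R -> R) {A : set (T * T)} : measurable A ->
  leb2 [set p | A (p.1, p.2 + f p.1)] = leb2 A.
Proof.
move=> mA; apply: eq_integral => x _ /=.
rewrite [RHS](@lebesgue_measure_affine 1 (f x)) ?mul1e//; last first.
  exact: measurable_xsection.
by congr (leb _); apply/seteqP; split => y; rewrite /xsection /= !inE /= mul1r.
Qed.

Lemma product_lebesgue_scale {k : R} {A : set (T * T)} : 0 < k -> measurable A ->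
  leb2 [set p | A (p.1, k * p.2)] = ((k^-1)%:E * leb2 A)%E.
Proof.
move=> k0 mA; rewrite /product_measure1 -ge0_integralZl //; last 2 first.
- exact: measurable_fun_xsection.
- by rewrite lee_fin invr_ge0 ltW.
apply: eq_integral => x _ /=.
rewrite (@lebesgue_measure_affine k 0 (xsection A x) k0); last exact: measurable_xsection.
rewrite muleA -EFinM mulVf ?lt0r_neq0 // mul1e.
by congr (leb _); apply/seteqP; split => y; rewrite /xsection /= !inE /= addr0.
Qed.

Lemma product_lebesgue_swap {A : set (T * T)} : measurable A ->
  leb2 [set p | A (p.2, p.1)] = leb2 A.
Proof.
move=> mA; rewrite (@product_measure_unique _ _ T T R leb leb (leb \x^ leb)%E _ A mA); last first.
  by move=> X Y mX mY; exact: product_measure2E.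
apply: eq_integral => x _ /=.
by congr (leb _); apply/seteqP; split => y; rewrite /xsection /ysection /= !inE.
Qed.

Lemma measurable_preimageT {h : T * T -> T * T} {A : set (T * T)} :
  measurable_fun setT h -> measurable A -> measurable [set p | A (h p)].
Proof. by move=> mh mA; rewrite -[X in measurable X]setTI; exact: mh. Qed.

Lemma measurable_swap : measurable_fun setT (fun p : T * T => (p.2, p.1)).
Proof. exact: measurable_fun_pair. Qed.

Lemma measurable_shear (a b : R) :
  measurable_fun setT (fun p : T * T => (p.1, p.2 + (a * p.1 + b))).
Proof.
apply: measurable_fun_pair => //.
apply: measurable_realfun.measurable_funD => //.
apply: measurable_realfun.measurable_funD => //.
exact: measurable_realfun.measurable_funM.
Qed.

Lemma measurable_scale (k : R) :
  measurable_fun setT (fun p : T * T => (p.1, k * p.2)).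
Proof.
apply: measurable_fun_pair => //.
exact: measurable_realfun.measurable_funM.
Qed.

Definition affine2 (a b c d e f : R) (p : R * R) : R * R :=
  (a * p.1 + b * p.2 + e, c * p.1 + d * p.2 + f).

(* With u := s + (c t + f) / d and k := (ad - bc) / d, affine2 sends (t,s) to
   (k t + (b/d) (d u) + e - b f / d, d u), so its preimages factor through
   shears, swaps and the scalings by d and k. *)
Lemma product_lebesgue_affine (a b c d e f : R) (A : set (T * T)) :
  0 < d -> 0 < a * d - b * c -> measurable A ->
  leb2 [set p | A (affine2 a b c d e f p)] = (((a * d - b * c)^-1)%:E * leb2 A)%E.
Proof.
move=> d0 det0 mA; set k := (a * d - b * c) / d.
have k0 : 0 < k by rewrite divr_gt0.
pose A1 := [set p : T * T | A (p.2, p.1)].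
pose A2 := [set p : T * T | A1 (p.1, p.2 + (b / d * p.1 + (e - b * f / d)))].
pose A3 := [set p : T * T | A2 (p.1, k * p.2)].
pose A4 := [set p : T * T | A3 (p.2, p.1)].
pose A5 := [set p : T * T | A4 (p.1, d * p.2)].
have mA1 : measurable A1 := measurable_preimageT measurable_swap mA.
have mA2 : measurable A2 := measurable_preimageT (measurable_shear _ _) mA1.
have mA3 : measurable A3 := measurable_preimageT (measurable_scale _) mA2.
have mA4 : measurable A4 := measurable_preimageT measurable_swap mA3.
have mA5 : measurable A5 := measurable_preimageT (measurable_scale _) mA4.
have -> : [set p | A (affine2 a b c d e f p)] =
          [set p | A5 (p.1, p.2 + (c / d * p.1 + f / d))].
  apply/seteqP; split => -[t s]; rewrite /A5 /A4 /A3 /A2 /A1 /affine2 /= /k;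
  by congr (A _); congr pair; field; exact: lt0r_neq0.
rewrite (product_lebesgue_shear (fun t => c / d * t + f / d) mA5).
rewrite (product_lebesgue_scale d0 mA4) (product_lebesgue_swap mA3).
rewrite (product_lebesgue_scale k0 mA2).
rewrite (product_lebesgue_shear (fun t => b / d * t + (e - b * f / d)) mA1).
rewrite (product_lebesgue_swap mA).
by rewrite muleA -EFinM -invfM mulrC divfK ?lt0r_neq0.
Qed.

Lemma uniform_prob_unit (a b : R) (ab : a < b) (A : set T) : b - a = 1 ->
  measurable A -> uniform_prob ab A = leb (A `&` `]a, b[).
Proof.
move=> ab1 mA; rewrite /uniform_prob integral_uniform_pdf.
transitivity (\int[leb]_(x in A `&` `[a, b]) (cst 1%:E) x)%E.
  apply: eq_integral => x; rewrite inE /= in_itv /= => -[_ xab].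
  by rewrite /uniform_pdf xab ab1 invr1.
rewrite integral_cst ?mul1e; last exact: measurableI.
have -> : A `&` `[a, b] = (A `&` `]a, b[) `|` (A `&` ([set a] `|` [set b])).
  apply/seteqP; split => x /=; rewrite !in_itv /=.
    move=> [Ax /andP[xa xb]].
    have [eq_xa|neq_xa] := eqVneq x a; first by right; split => //; left.
    have [eq_xb|neq_xb] := eqVneq x b; first by right; split => //; right.
    by left; split => //; rewrite !lt_neqAle xa xb eq_sym neq_xa neq_xb.
  move=> [[Ax /andP[? ?]]|[Ax [|] xe]]; [|subst x..];
    by split => //; apply/andP; split; lra.
apply: measureU0; [exact: measurableI | by apply: measurableI => //; exact: measurableU|].
apply/eqP; rewrite eq_le measure_ge0 andbT.
rewrite -(lebesgue_measure_set1 a) -[X in (_ <= X)%E]adde0 -(lebesgue_measure_set1 b).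
apply: le_trans (measureU2 _ _ _) => //.
apply: le_measure; rewrite ?inE; last by move=> x [].
- by apply: measurableI => //; exact: measurableU.
- exact: measurableU.
Qed.

Lemma product_uniform_prob_unit (a1 b1 a2 b2 : R) (ab1 : a1 < b1) (ab2 : a2 < b2)
    (X : set (T * T)) : b1 - a1 = 1 -> b2 - a2 = 1 -> measurable X ->
  (uniform_prob ab1 \x uniform_prob ab2)%E X = leb2 (X `&` (`]a1, b1[ `*` `]a2, b2[)).
Proof.
move=> h1 h2 mX.
have mS : measurable (`]a1, b1[ `*` `]a2, b2[ : set (T * T)) by exact: measurableX.
apply: (@product_measure_unique _ _ T T R _ _ (mrestr leb2 mS) _ X mX) => A B mA mB.
rewrite /= /mrestr -setXI (product_measure1E leb leb).
- by rewrite !uniform_prob_unit.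
- by apply: measurableI.
- by apply: measurableI.
Qed.

End affine_change_of_variables.

Section cubic_roots.
Context {R : realType}.

Lemma quadratic_vieta {a b c u w : R} : u != w ->
  a * u ^+ 2 + b * u + c = 0 -> a * w ^+ 2 + b * w + c = 0 ->
  b = - a * (u + w) /\ c = a * u * w.
Proof.
move=> uw Qu Qw.
have hb : b = - a * (u + w).
  have : (u - w) * (a * (u + w) + b)
         = (a * u ^+ 2 + b * u + c) - (a * w ^+ 2 + b * w + c) by ring.
  rewrite Qu Qw subrr => /eqP; rewrite mulf_eq0 subr_eq0 (negbTE uw) /= addr_eq0 => /eqP e.
  by rewrite mulNr e opprK.
split => //; apply/eqP; rewrite -subr_eq0 -[X in _ == X]Qu hb; apply/eqP; ring.
Qed.

Lemma quadratic_factor {a b c r : R} (x : R) : a != 0 -> r ^+ 2 = b ^+ 2 - 4 * a * c ->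
  a * x ^+ 2 + b * x + c
  = a * ((x - (b - r) / (- (2 * a))) * (x - (b + r) / (- (2 * a)))).
Proof.
move=> a0 rr; apply/eqP; rewrite -subr_eq0; apply/eqP.
have -> : a * x ^+ 2 + b * x + c - a * ((x - (b - r) / (- (2 * a))) *
  (x - (b + r) / (- (2 * a)))) = (r ^+ 2 - (b ^+ 2 - 4 * a * c)) / (4 * a).
  by field.
by rewrite rr subrr mul0r.
Qed.

(* 0 is always one of the three roots; the hypothesis rules out the root 1. *)
Lemma three_roots_01_quadratic_roots (a b c : R) : a + b + c != 0 ->
  three_roots_01 (fun x => a * x ^+ 3 + b * x ^+ 2 + c * x) ->
  exists u w : R, [/\ 0 < u, u < w, w < 1,
    a * u ^+ 2 + b * u + c = 0 & a * w ^+ 2 + b * w + c = 0].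
Proof.
move=> abc0 [x1 [x2 [x3 [lt12 [lt23 zeros]]]]].
have zeroP x : (0 <= x <= 1 /\ a * x ^+ 3 + b * x ^+ 2 + c * x = 0) <->
    ((x = x1 \/ x = x2) \/ x = x3).
  by have := congr1 (fun S : set R => S x) zeros; rewrite /= => ->.
have quad_root x : 0 < x -> a * x ^+ 3 + b * x ^+ 2 + c * x = 0 ->
    a * x ^+ 2 + b * x + c = 0.
  move=> x0 Px; have /eqP : x * (a * x ^+ 2 + b * x + c) = 0 by rewrite -Px; ring.
  by rewrite mulf_eq0 gt_eqF //= => /eqP.
have [/andP[x10 _] _] := (zeroP x1).2 (or_introl (or_introl erefl)).
have [/andP[_ x21] P2] := (zeroP x2).2 (or_introl (or_intror erefl)).
have [/andP[_ x31] P3] := (zeroP x3).2 (or_intror erefl).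
have x1_0 : x1 = 0.
  have : ((0 : R) = x1 \/ 0 = x2) \/ 0 = x3.
    by apply/zeroP; rewrite lexx ler01; split => //; ring.
  by move=> [[//|?]|?]; lra.
have x20 : 0 < x2 by lra.
have Q3 := quad_root x3 (lt_trans x20 lt23) P3.
exists x2, x3; split; [done | done | | exact: quad_root x2 x20 P2 | exact: Q3].
rewrite lt_neqAle x31 andbT; apply: contra abc0 => /eqP x3_1.
by move: Q3; rewrite x3_1 expr1n !mulr1 => ->.
Qed.

Lemma three_roots_01_factor (a z1 z2 : R) : a != 0 -> 0 < z1 -> z1 < z2 -> z2 < 1 ->
  three_roots_01 (fun x => x * (a * ((x - z1) * (x - z2)))).
Proof.
move=> a0 z10 z12 z21; exists 0, z1, z2; split => //; split => //.
apply/seteqP; split => x /=.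
- move=> [_ /eqP]; rewrite !mulf_eq0 (negbTE a0) !subr_eq0 /=.
  by move=> /orP[/eqP->|/orP[/eqP->|/eqP->]]; [left; left | left; right | right].
- by move=> [[->|->]|->]; split; rewrite ?subrr ?(mul0r, mulr0) //; apply/andP; split; lra.
Qed.

Lemma three_roots_01_cubic_conditions (q a b c : R) : 0 < q -> a + b + c = - q ->
  three_roots_01 (fun x => a * x ^+ 3 + b * x ^+ 2 + c * x) ->
  a < 0 /\ c < 0 /\ 0 < b ^+ 2 - 4 * a * c /\ 0 < b /\ a < q + c.
Proof.
move=> q0 abc /three_roots_01_quadratic_roots[|u [w [u0 uw w1 Qu Qw]]].
  by rewrite abc oppr_eq0 gt_eqF.
have [hb hc] := quadratic_vieta (negbT (lt_eqF uw)) Qu Qw.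
have hq : a * ((1 - u) * (1 - w)) = - q by rewrite -abc hb hc; ring.
have an : a < 0.
  have p0 : 0 <= (1 - u) * (1 - w) by apply: mulr_ge0; lra.
  rewrite ltNge; apply/negP => a0.
  by have := mulr_ge0 a0 p0; rewrite hq => ?; lra.
rewrite hb hc; have uw0 : 0 < u * w by apply: mulr_gt0; lra.
have hd : 0 < a * (u - w) by nra.
by do 4 (split; first nra); nra.
Qed.

Lemma conditions_three_roots_01_cubic (q a b c : R) : 0 < q -> a + b + c = - q ->
  a < 0 -> c < 0 -> 0 < b ^+ 2 - 4 * a * c -> 0 < b -> a < q + c ->
  three_roots_01 (fun x => a * x ^+ 3 + b * x ^+ 2 + c * x).
Proof.
move=> q0 abc an cn dp bp aqc.
pose r := Num.sqrt (b ^+ 2 - 4 * a * c).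
have r0 : 0 < r by rewrite sqrtr_gt0.
have rr : r ^+ 2 = b ^+ 2 - 4 * a * c by rewrite sqr_sqrtr // ltW.
have a2 : 0 < - (2 * a) by lra.
have rb : r < b by nra.
have rb2 : b + r < - (2 * a).
  (* (-2a - b)^2 - r^2 = 4a(a + b + c) = -4aq > 0 *)
  have : r ^+ 2 < (- (2 * a) - b) ^+ 2 by rewrite rr; nra.
  by nra.
have -> : (fun x => a * x ^+ 3 + b * x ^+ 2 + c * x) = (fun x =>
    x * (a * ((x - (b - r) / (- (2 * a))) * (x - (b + r) / (- (2 * a)))))).
  by apply: funext => x; rewrite -(quadratic_factor x (ltr0_neq0 an) rr); ring.
apply: three_roots_01_factor; first exact: ltr0_neq0.
- by rewrite divr_gt0 // subr_gt0.
- by rewrite ltr_pM2r ?invr_gt0 //; lra.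
- by rewrite ltr_pdivrMr // mul1r.
Qed.

End cubic_roots.

Section proposition2p4.
Context {R : realType}.
Local Notation T := (measurableTypeR R).

Definition E3_region (q : R) : set (T * T) := [set ts |
  ts.1 + ts.2 - 1 < 0 /\ ts.2 + q * (ts.1 - ts.2) < 0 /\
  0 < (1 - ts.1 - 2 * ts.2 + q * (ts.2 - 1 - ts.1)) ^+ 2
      - 4 * (ts.1 + ts.2 - 1) * (ts.2 + q * (ts.1 - ts.2)) /\
  0 < 1 - ts.1 - 2 * ts.2 + q * (ts.2 - 1 - ts.1) /\
  ts.1 + ts.2 - 1 < q + (ts.2 + q * (ts.1 - ts.2))].

Lemma E3_regionE (q : R) : 0 < q -> E3 q = E3_region q.
Proof.
move=> q0; apply/seteqP; split => -[t s] /=.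
- by apply: three_roots_01_cubic_conditions => //; ring.
- by move=> [an [cn [dp [bp aqc]]]]; apply: (@conditions_three_roots_01_cubic _ q) => //; ring.
Qed.

Lemma measurable_set_lt (f g : T * T -> R) :
  measurable_fun setT f -> measurable_fun setT g -> measurable [set p | f p < g p].
Proof.
move=> mf mg; rewrite -[X in measurable X]setTI.
exact: (measurable_realfun.measurable_fun_ltr mf mg) measurableT [set true] _.
Qed.

Lemma measurable_set_lt2 (f g h : T * T -> R) : measurable_fun setT f ->
  measurable_fun setT g -> measurable_fun setT h -> measurable [set p | f p < g p < h p].
Proof.
move=> mf mg mh.
have -> : [set p | f p < g p < h p] = [set p | f p < g p] `&` [set p | g p < h p].
  by apply/seteqP; split => p /= => [/andP[]|[-> ->]].
by apply: measurableI; exact: measurable_set_lt.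
Qed.

Ltac measurable_polynomial := repeat first
  [ apply: measurable_realfun.measurable_funD | apply: measurable_realfun.measurable_funB
  | apply: measurable_realfun.measurable_funM | apply: measurable_realfun.measurable_funN
  | apply: measurable_cst | apply: measurable_fst | apply: measurable_snd ].

Lemma measurable_E3 (q : R) : 0 < q -> measurable (E3 q : set (T * T)).
Proof.
move=> q0; rewrite E3_regionE //.
by repeat apply: measurableI; apply: measurable_set_lt; measurable_polynomial.
Qed.

Lemma measurable_D_D2 (q : R) : measurable (D q `&` D2 q : set (T * T)).
Proof.
by repeat apply: measurableI; apply: measurable_set_lt2; measurable_polynomial.
Qed.

(* The right-hand side is E3_region and the square ]1,2[ x ]-1,0[ written in
   the coordinates (x, y) of E3_square_affine. *)
Lemma D_D2E (q x y : R) : 0 < q -> q < 1 / 2 ->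
  (D q `&` D2 q) (x, y) <->
  x + y < 0 /\ y + q < 0 /\ 0 < x ^+ 2 + 4 * q * (y + q) /\ x + 2 * y + 2 * q < 0 /\
  x < 2 * q /\ 0 < (1 - q) * x - q * y /\ (1 - q) * x - q * y < 1 - 2 * q /\
  - (1 - 2 * q) < - q * x + (1 - q) * y /\ - q * x + (1 - q) * y < 0.
Proof.
move=> q0 q1; rewrite /D /D2 /=.
have q1' : 0 < 1 - q by lra.
have q4 : 0 < 4 * q by lra.
have -> : (- (x ^+ 2) / (4 * q) - q < y) = (0 < x ^+ 2 + 4 * q * (y + q)).
  by rewrite ltrBlDr ltr_pdivrMr // -subr_gt0; apply/idP/idP => h; nra.
have -> : ((q * x - (1 - 2 * q)) / (1 - q) < y) = (- (1 - 2 * q) < - q * x + (1 - q) * y).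
  by rewrite ltr_pdivrMr //; apply/idP/idP => h; nra.
have -> : (y < (1 - q) * x / q) = (0 < (1 - q) * x - q * y).
  by rewrite ltr_pdivlMr //; apply/idP/idP => h; nra.
split.
- move=> [[/andP[h1 h2] /andP[h3 h4]] [/andP[h5 h6] /andP[h7 h8]]].
  do 6 (split; first lra); split; first nra; split; first lra; nra.
- move=> [h1 [h2 [h3 [h4 [h5 [h6 [h7 [h8 h9]]]]]]]].
  have xn : x < 0 by nra.
  have xq : - q < x by nra.
  by split; (split; [apply/andP; split; lra | apply/andP; split; lra]).
Qed.

Lemma E3_square_affine (q : R) : 0 < q -> q < 1 / 2 ->
  E3 q `&` (`]1, 2[ `*` `]-1, 0[) =
  [set p : T * T | (D q `&` D2 q) (affine2 (1 - q) q q (1 - q) (q - 1) (- q) p)].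
Proof.
move=> q0 q1; rewrite E3_regionE // predeqE => -[t s].
set x : R := (1 - q) * t + q * s + (q - 1); set y : R := q * t + (1 - q) * s - q.
rewrite -[X in _ <-> X]/((D q `&` D2 q) (x, y)) D_D2E // /E3_region /= !in_itv /=.
have e1 : x + y = t + s - 1 by rewrite /x /y; ring.
have e2 : y + q = s + q * (t - s) by rewrite /y; ring.
have e3 : x ^+ 2 + 4 * q * (y + q) = (1 - t - 2 * s + q * (s - 1 - t)) ^+ 2
  - 4 * (t + s - 1) * (s + q * (t - s)) by rewrite /x /y; ring.
have e4 : x + 2 * y + 2 * q = - (1 - t - 2 * s + q * (s - 1 - t)).
  by rewrite /x /y; ring.
have e5 : x - 2 * q = (t + s - 1) - (q + (s + q * (t - s))) by rewrite /x; ring.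
have e6 : (1 - q) * x - q * y = (1 - 2 * q) * (t - 1) by rewrite /x /y; ring.
have e7 : - q * x + (1 - q) * y = (1 - 2 * q) * s by rewrite /x /y; ring.
have q2 : 0 < 1 - 2 * q by lra.
clearbody x y; split.
- move=> [[h1 [h2 [h3 [h4 h5]]]] [/andP[t1 t2] /andP[s1 s2]]].
  by do 5 (split; first lra); do 3 (split; first nra); nra.
- move=> [h1 [h2 [h3 [h4 [h5 [h6 [h7 [h8 h9]]]]]]]].
  split; first by do 4 (split; first lra); lra.
  by split; apply/andP; split; nra.
Qed.

End proposition2p4.

Theorem proposition2p4 (R : realType) (q : R) (hq0 : 0 < q) (hq1 : q < 1 / 2) :
  ((uniform_prob (@lt_1_2 R) \x uniform_prob (@lt_m1_0 R)) (E3 q)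
   = ((1 - 2 * q)^-1)%:E
     * ((@lebesgue_measure R) \x (@lebesgue_measure R)) (D q `&` D2 q))%E.
Proof.
rewrite product_uniform_prob_unit; [|lra|lra|exact: measurable_E3].
rewrite E3_square_affine // product_lebesgue_affine; [|lra|nra|exact: measurable_D_D2].
by congr (_%:E * _)%E; congr (_^-1); ring.
Qed.
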